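(* Let $K$ be a field, $A$ a cocommutative Hopf algebra over $K$ with antipode $S$, and $x\colon X\to A$, $y\colon Y\to A$ inclusions of Hopf subalgebras. The following are equivalent: (a) there exists a (necessarily unique) morphism of Hopf algebras $p\colon X\otimes Y\to A$ with $p(a\otimes 1)=a$ for all $a\in X$ and $p(1\otimes b)=b$ for all $b\in Y$; (b) $ab=ba$ for all $a\in X$ and $b\in Y$; (c) $a_1b_1S(a_2)S(b_2)=\epsilon(a)\epsilon(b)1$ for all $a\in X$ and $b\in Y$.
   Context: Sweedler notation $\Delta(a)=a_1\otimes a_2$ is used. $X\otimes Y$ is the product of $X$ and $Y$ in the category of cocommutative Hopf algebras, with the tensor product Hopf algebra structure; condition (a) says that $X$ and $Y$ commute in the sense of Huq. *)

(* Hopf algebras over a field K, with tensors encoded by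
   finite Sweedler-style representatives. *)
From HB Require Import structures.
From mathcomp Require Import all_boot all_order all_algebra.
Set Implicit Arguments. Unset Strict Implicit. Unset Printing Implicit Defensive.
Import GRing.Theory.
Local Open Scope ring_scope.

Section Tensors.
Variable K : fieldType.

(* Two finite representatives s, t of elements of V (x) W are equal as
   tensors iff they agree under all pairs of linear functionals
   (V (x) W embeds into Bil(V^* x W^*, K) over a field). *)
Definition teq2 (V W : lmodType K) (s t : seq (V * W)) : Prop :=
  forall (f : {scalar V}) (g : {scalar W}),
    \sum_(p <- s) f p.1 * g p.2 = \sum_(p <- t) f p.1 * g p.2.

Definition teq3 (U V W : lmodType K) (s t : seq (U * V * W)) : Prop :=
  forall (f : {scalar U}) (g : {scalar V}) (h : {scalar W}),
    \sum_(p <- s) f p.1.1 * g p.1.2 * h p.2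
    = \sum_(p <- t) f p.1.1 * g p.1.2 * h p.2.
End Tensors.

Section Hopf.
Variables (K : fieldType) (A : algType K).

(* D a is a (chosen) representative of Delta(a) = sum a_1 (x) a_2. *)
Definition hopf_algebra (D : A -> seq (A * A)) (e : A -> K) (S : A -> A)
  : Prop :=
  [/\
      forall (k : K) (a b : A),
        teq2 (D (k *: a + b)) ([seq (k *: p.1, p.2) | p <- D a] ++ D b),
      forall a : A,
        teq3 [seq (q.1, q.2, p.2) | p <- D a, q <- D p.1]
             [seq (p.1, q.1, q.2) | p <- D a, q <- D p.2],
      (forall (k : K) (a b : A), e (k *: a + b) = k * e a + e b) /\
      (forall a : A, \sum_(p <- D a) e p.1 *: p.2 = a /\
                     \sum_(p <- D a) e p.2 *: p.1 = a),
      [/\ forall a b : A,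
            teq2 (D (a * b)) [seq (p.1 * q.1, p.2 * q.2) | p <- D a, q <- D b],
          teq2 (D 1) [:: (1, 1)],
          forall a b : A, e (a * b) = e a * e b
        & e 1 = 1]
    &
      (forall (k : K) (a b : A), S (k *: a + b) = k *: S a + S b) /\
      (forall a : A, \sum_(p <- D a) S p.1 * p.2 = (e a)%:A /\
                     \sum_(p <- D a) p.1 * S p.2 = (e a)%:A)].

Definition cocommutative (D : A -> seq (A * A)) : Prop :=
  forall a : A, teq2 (D a) [seq (p.2, p.1) | p <- D a].

Definition in2 (X Y : A -> Prop) (s : seq (A * A)) : Prop :=
  forall p, p \in s -> X p.1 /\ Y p.2.

Definition hopf_subalgebra (D : A -> seq (A * A)) (S : A -> A) (X : A -> Prop)
  : Prop :=
  [/\ X 1,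
      forall (k : K) (a b : A), X a -> X b -> X (k *: a + b),
      forall a b : A, X a -> X b -> X (a * b),
      forall a : A, X a -> X (S a)
    & forall a : A, X a -> exists s, in2 X X s /\ teq2 s (D a)].

(* A linear map p : X (x) Y -> A, given by the bilinear map
   P a b = p (a (x) b) on X x Y, is a morphism of Hopf algebras, where
   X (x) Y carries the tensor product Hopf algebra structure. *)
Definition tensor_hopf_morphism (D : A -> seq (A * A)) (e : A -> K)
  (S : A -> A) (X Y : A -> Prop) (P : A -> A -> A) : Prop :=
  [/\
      (forall (k : K) (a a' b : A), X a -> X a' -> Y b ->
         P (k *: a + a') b = k *: P a b + P a' b) /\
      (forall (k : K) (a b b' : A), X a -> Y b -> Y b' ->
         P a (k *: b + b') = k *: P a b + P a b'),
      P 1 1 = 1 /\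
      (forall a a' b b', X a -> X a' -> Y b -> Y b' ->
         P (a * a') (b * b') = P a b * P a' b'),
      (forall a b s t, X a -> Y b -> in2 X X s -> teq2 s (D a) ->
         in2 Y Y t -> teq2 t (D b) ->
         teq2 (D (P a b)) [seq (P p.1 q.1, P p.2 q.2) | p <- s, q <- t]) /\
      (forall a b, X a -> Y b -> e (P a b) = e a * e b)
    &
      forall a b, X a -> Y b -> S (P a b) = P (S a) (S b)].
End Hopf.

(* Over a field every nonzero vector is sent to 1 by some
   functional (a maximal subspace avoiding it is a hyperplane, by Zorn), which
   lets one peel off the terms of a list one by one: two equivalent lists then
   give the same value to every bilinear or trilinear map.  So Sweedler
   computations can be moved freely between [D a] and any representative of
   [Delta(a)] with legs in [X], where the hypotheses on [X] and [Y] apply.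

   (b) -> (c): [a_1 b_1 S(a_2) S(b_2) = a_1 S(a_2) b_1 S(b_2)].
   (c) -> (b): [b a = a_1 b_1 S(a_2) S(b_2) b_3 a_3 = a b] by coassociativity
   and the antipode axioms.
   (a) <-> (b): a unital morphism [p] must satisfy both
   [p(a (x) b) = p(a (x) 1) p(1 (x) b) = a b] and [p(a (x) b) = b a]; conversely
   when [X] and [Y] commute, multiplication is a Hopf morphism, compatibility
   with the antipodes coming from [S(a b) = S(b) S(a)]. *)

From HB Require Import structures.
From mathcomp Require Import all_boot all_order all_algebra.
From mathcomp Require Import boolp classical_sets.
Set Implicit Arguments. Unset Strict Implicit. Unset Printing Implicit Defensive.
Import GRing.Theory.
Local Open Scope ring_scope.

Definition linear_of (K : fieldType) (V W : lmodType K) (f : V -> W) (fL : linear f)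
  : {linear V -> W} := HB.pack f (GRing.isLinear.Build K V W *:%R f fL).

Definition scalar_of (K : fieldType) (V : lmodType K) (f : V -> K) (fL : scalar f)
  : {scalar V} := HB.pack f (GRing.isLinear.Build K V K *%R f fL).

Section Separation.
Variables (K : fieldType) (V : lmodType K) (x : V).
Hypothesis x_neq0 : x != 0.

Definition lin_closed (U : set V) := forall k a b, U a -> U b -> U (k *: a + b).

Lemma lin_closedZ U k a : lin_closed U -> U a -> U (k *: a).
Proof.
by move=> Ucl Ua; have := Ucl (k - 1) a a Ua Ua; rewrite scalerBl scale1r subrK.
Qed.

Let avoiding (U : set V) := lin_closed U /\ ~ U x.

Lemma exists_maximal_avoiding :
  exists W, avoiding W /\ forall U, (W `<` U)%classic -> ~ avoiding U.
Proof.
apply: Zorn_bigcup => F Favoid Ftot; split; last first.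
  by case=> W FW Wx; exact: (Favoid W FW).2.
move=> k a b [Wa Fa aWa] [Wb Fb bWb].
have [WaWb|WbWa] := Ftot Wa Wb Fa Fb.
- by exists Wb => //; apply: (Favoid Wb Fb).1 => //; exact: WaWb.
- by exists Wa => //; apply: (Favoid Wa Fa).1 => //; exact: WbWa.
Qed.

Variable W : set V.
Hypotheses (W_closed : lin_closed W) (W_x : ~ W x).
Hypothesis W_max : forall U, (W `<` U)%classic -> ~ avoiding U.

Lemma maximal_avoiding0 : W 0.
Proof.
have [[w Ww]|W_empty] := pselect (exists w, W w).
  by rewrite -(scale0r w); exact: lin_closedZ.
exfalso; apply: (W_max (U := [set 0])); last first.
  split; last by move=> /eqP; rewrite (negbTE x_neq0).
  by move=> k a b -> ->; rewrite scaler0 addr0.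
split; first by move=> w Ww; case: W_empty; exists w.
by move=> /(_ 0 erefl) W0; case: W_empty; exists 0.
Qed.

Lemma maximal_avoiding_coord_uniq v c d :
  W (v - c *: x) -> W (v - d *: x) -> c = d.
Proof.
move=> Wc Wd; apply/eqP; apply: contraT => c_neq_d; case: W_x.
have : W ((c - d) *: x).
  have := W_closed (-1) Wc Wd.
  by rewrite scaleN1r opprB addrA subrK scalerBl.
move=> /(lin_closedZ (c - d)^-1 W_closed).
by rewrite scalerA mulVf ?scale1r // subr_eq0.
Qed.

Lemma maximal_avoiding_coord v : exists c, W (v - c *: x).
Proof.
have [Wv|nWv] := pselect (W v); first by exists 0; rewrite scale0r subr0.
pose Wv a := exists c, W (a - c *: v).
have [c Wxc] : Wv x.
  apply: contrapT => Wvx; apply: (W_max (U := Wv)); last first.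
    split=> // k a b [c Wa] [d Wb]; exists (k * c + d).
    have := W_closed k Wa Wb; congr W.
    by rewrite scalerDl -scalerA scalerBr opprD addrACA.
  split; first by move=> w Ww; exists 0; rewrite scale0r subr0.
  move=> WvW; apply/nWv/WvW; exists 1.
  by rewrite scale1r subrr; exact: maximal_avoiding0.
have c_neq0 : c != 0.
  by apply: contraPneq W_x => c0; move: Wxc; rewrite c0 scale0r subr0.
exists c^-1; have := lin_closedZ (- c^-1) W_closed Wxc; congr W.
by rewrite scalerBr !scaleNr scalerA mulVf // scale1r opprK addrC.
Qed.

End Separation.

Lemma exists_scalar_eq1 (K : fieldType) (V : lmodType K) (x : V) :
  x != 0 -> exists f : {scalar V}, f x = 1.
Proof.
move=> x_neq0.
have [W [[W_closed W_x] W_max]] := exists_maximal_avoiding x.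
have coord v := maximal_avoiding_coord x_neq0 W_closed W_x W_max v.
have uniq := maximal_avoiding_coord_uniq W_closed W_x.
pose f v := projT1 (cid (coord v)).
have fP v : W (v - f v *: x) := projT2 (cid (coord v)).
have fL : scalar f.
  move=> k a b; apply: (uniq (k *: a + b)); first exact: fP.
  have := W_closed k _ _ (fP a) (fP b); congr W.
  by rewrite scalerDl -scalerA scalerBr opprD addrACA.
exists (scalar_of fL); apply: (uniq x); first exact: fP.
by rewrite scale1r subrr; exact: maximal_avoiding0 W_max.
Qed.

Section LinearFun.
Variables (K : fieldType) (V W : lmodType K) (f : V -> W).
Hypothesis f_linear : linear f.

Lemma linear_fun0 : f 0 = 0.
Proof. exact: (raddf0 (linear_of f_linear)). Qed.

Lemma linear_funZ k v : f (k *: v) = k *: f v.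
Proof. exact: scalable_linear f_linear k v. Qed.

Lemma linear_fun_sum (I : Type) (r : seq I) (v : I -> V) :
  f (\sum_(i <- r) v i) = \sum_(i <- r) f (v i).
Proof. exact: (linear_sum (linear_of f_linear)). Qed.

End LinearFun.

Lemma sumr_cat_oppl (V : zmodType) (Z : Type) (M : zmodType) (F : V -> Z -> M)
    (s t : seq (V * Z)) :
  (forall v z, F (- v) z = - F v z) ->
  \sum_(p <- s ++ [seq (- p.1, p.2) | p <- t]) F p.1 p.2
    = \sum_(p <- s) F p.1 p.2 - \sum_(p <- t) F p.1 p.2.
Proof.
move=> FN; rewrite big_cat big_map -sumrN.
by congr (_ + _); apply: eq_bigr => p _; exact: FN.
Qed.

Section Contraction.
Variables (K : fieldType) (V : lmodType K).

Lemma scaler_sum_eq0 (r : seq (K * V)) :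
  (forall g : {scalar V}, \sum_(p <- r) p.1 * g p.2 = 0) ->
  \sum_(p <- r) p.1 *: p.2 = 0.
Proof.
move=> r_null; apply/eqP; apply: contraT => /exists_scalar_eq1 [g g1].
have : g (\sum_(p <- r) p.1 *: p.2) = 0.
  by rewrite linear_sum -[RHS](r_null g); apply: eq_bigr => p _; rewrite linearZ.
by rewrite g1 => /eqP; rewrite oner_eq0.
Qed.

(* [Z := W] with [T] the scalars on [W] gives the case of [teq2]; [Z := V * W]
   with [T] the products [g z.1 * h z.2] gives the case of [teq3]. *)
Variables (Z : Type) (T : set (Z -> K)) (M : lmodType K) (B : V -> Z -> M).
Hypothesis B_linear : forall z, linear (B^~ z).
Hypothesis B_null : forall (x : V) (r : seq (K * Z)),
  (forall phi, T phi -> \sum_(p <- r) p.1 * phi p.2 = 0) ->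
  \sum_(p <- r) p.1 *: B x p.2 = 0.

(* Induction on the length: with [f0 v = 1], the first term [B v z] is
   absorbed by replacing every other [v_i] by [v_i - f0 v_i *: v]. *)
Lemma contraction_eq0 (r : seq (V * Z)) :
  (forall (f : {scalar V}) phi, T phi -> \sum_(p <- r) f p.1 * phi p.2 = 0) ->
  \sum_(p <- r) B p.1 p.2 = 0.
Proof.
have [n] := ubnP (size r); elim: n r => // n IH [|[v z] r] /=.
  by rewrite big_nil.
rewrite ltnS => size_r r_null.
have r_null' (f : {scalar V}) phi :
    T phi -> f v * phi z + \sum_(p <- r) f p.1 * phi p.2 = 0.
  by move=> /(r_null f); rewrite big_cons.
rewrite big_cons /=; have [v0|v_neq0] := eqVneq v 0.
  rewrite v0 (linear_fun0 (B_linear z)) add0r; apply: IH => // f phi Tphi.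
  by have := r_null' f phi Tphi; rewrite v0 linear0 mul0r add0r.
have [f0 f0v] := exists_scalar_eq1 v_neq0.
have f0_null phi : T phi -> \sum_(p <- r) f0 p.1 * phi p.2 = - phi z.
  move=> Tphi; apply/eqP; rewrite -addr_eq0 addrC -[phi z]mul1r -f0v.
  by rewrite r_null'.
have Bvz : B v z = - \sum_(p <- r) f0 p.1 *: B v p.2.
  apply/eqP; rewrite -addr_eq0; apply/eqP.
  have := @B_null v [seq (f0 p.1, p.2) | p <- (v, z) :: r].
  rewrite big_map big_cons /= f0v scale1r; apply=> phi Tphi.
  by rewrite big_cons big_map /= mul1r f0_null // addrN.
have := IH [seq (p.1 - f0 p.1 *: v, p.2) | p <- r].
rewrite size_map big_map => /(_ size_r) IHr.
rewrite Bvz addrC -sumrB -[RHS]IHr; last first.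
  move=> f phi Tphi; rewrite big_map /=.
  transitivity (\sum_(p <- r) f p.1 * phi p.2
                - f v * \sum_(p <- r) f0 p.1 * phi p.2).
    rewrite mulr_sumr -sumrB; apply: eq_bigr => p _.
    by rewrite linearB linearZ /= mulrBl mulrA [f v * _]mulrC.
  by rewrite f0_null // mulrN opprK addrC r_null'.
apply: eq_bigr => p _ /=.
by rewrite (zmod_morphism_linear (B_linear p.2)) (linear_funZ (B_linear p.2)).
Qed.

End Contraction.

Section TensorTransfer.
Variable K : fieldType.

Lemma teq2_sum (V W M : lmodType K) (B : V -> W -> M) (s t : seq (V * W)) :
  (forall w, linear (B^~ w)) -> (forall v, linear (B v)) -> teq2 s t ->
  \sum_(p <- s) B p.1 p.2 = \sum_(p <- t) B p.1 p.2.
Proof.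
move=> B_linl B_linr st; apply/eqP; rewrite -subr_eq0; apply/eqP.
have BN v w : B (- v) w = - B v w := raddfN (linear_of (B_linl w)) v.
rewrite -(sumr_cat_oppl _ _ BN).
pose T (phi : W -> K) := exists g : {scalar W}, phi = g.
apply: (contraction_eq0 (T := T) B_linl).
  move=> x r r_null; transitivity (B x (\sum_(p <- r) p.1 *: p.2)).
    rewrite (linear_fun_sum (B_linr x)); apply: eq_bigr => p _.
    by rewrite (linear_funZ (B_linr x)).
  rewrite scaler_sum_eq0 ?(linear_fun0 (B_linr x)) // => g.
  by apply: r_null; exists g.
move=> f _ [g ->]; rewrite (sumr_cat_oppl (F := fun v w => f v * g w)).
  by rewrite st subrr.
by move=> v w; rewrite linearN mulNr.
Qed.

Lemma teq3_sum (U V W M : lmodType K) (B : U -> V -> W -> M)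
    (s t : seq (U * V * W)) :
  (forall v w, linear (fun u => B u v w)) ->
  (forall u w, linear (fun v => B u v w)) ->
  (forall u v, linear (B u v)) -> teq3 s t ->
  \sum_(p <- s) B p.1.1 p.1.2 p.2 = \sum_(p <- t) B p.1.1 p.1.2 p.2.
Proof.
move=> B_lin1 B_lin2 B_lin3 st; apply/eqP; rewrite -subr_eq0; apply/eqP.
pose curry (r : seq (U * V * W)) := [seq (p.1.1, (p.1.2, p.2)) | p <- r].
have BN u z : B (- u) z.1 z.2 = - B u z.1 z.2.
  exact: raddfN (linear_of (B_lin1 z.1 z.2)) u.
have := sumr_cat_oppl (curry s) (curry t) BN; rewrite !big_map /= => <-.
pose T phi :=
  exists (g : {scalar V}) (h : {scalar W}), phi = fun z => g z.1 * h z.2.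
apply: (contraction_eq0 (T := T) (B := fun u z => B u z.1 z.2))
  => [z|x r r_null|].
- exact: B_lin1.
- transitivity (\sum_(p <- r) B x (p.1 *: p.2.1) p.2.2).
    by apply: eq_bigr => p _; rewrite (linear_funZ (B_lin2 x p.2.2)).
  rewrite -(big_map (fun p => (p.1 *: p.2.1, p.2.2)) xpredT
                    (fun q => B x q.1 q.2)).
  rewrite (teq2_sum (t := [::]) (B_lin2 x) (B_lin3 x)) ?big_nil // => g h.
  rewrite big_map big_nil -[RHS](r_null (fun z => g z.1 * h z.2)).
    by apply: eq_bigr => p _; rewrite linearZ /= mulrA.
  by exists g, h.
move=> f _ [g [h ->]].
rewrite (sumr_cat_oppl (F := fun u z => f u * (g z.1 * h z.2))).
  rewrite !big_map /=.
  have assoc (r : seq (U * V * W)) : \sum_(p <- r) f p.1.1 * (g p.1.2 * h p.2)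
      = \sum_(p <- r) f p.1.1 * g p.1.2 * h p.2.
    by apply: eq_bigr => p _; rewrite mulrA.
  by rewrite !assoc st subrr.
by move=> u z; rewrite linearN mulNr.
Qed.

End TensorTransfer.

Section LinearClosure.
Variables (K : fieldType) (A : algType K).
Implicit Types (F : A -> A) (c : A).

Lemma linear_mulr_fun c F : linear F -> linear (fun x => F x * c).
Proof. by move=> FL k a b; rewrite FL mulrDl scalerAl. Qed.

Lemma linear_mull_fun c F : linear F -> linear (fun x => c * F x).
Proof. by move=> FL k a b; rewrite FL mulrDr scalerAr. Qed.

Lemma linear_scale_fun (k : K) F : linear F -> linear (fun x => k *: F x).
Proof. by move=> FL l a b; rewrite FL scalerDr !scalerA mulrC. Qed.

Lemma linear_sum_fun (I : Type) (r : seq I) (F : I -> A -> A) :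
  (forall i, linear (F i)) -> linear (fun x => \sum_(i <- r) F i x).
Proof.
move=> FL k a b; rewrite scaler_sumr -big_split.
by apply: eq_bigr => i _; exact: FL.
Qed.

Lemma linear_comp_fun (G F : A -> A) :
  linear G -> linear F -> linear (fun x => G (F x)).
Proof. by move=> GL FL k a b; rewrite FL GL. Qed.

Lemma linear_scalar_fun (f : A -> K) (v : A) F :
  scalar f -> linear F -> linear (fun x => f (F x) *: v).
Proof. by move=> fL FL k a b; rewrite FL fL scalerDl scalerA. Qed.

End LinearClosure.

Lemma teq2_allpairs_mul (K : fieldType) (A : algType K)
    (s s' t t' : seq (A * A)) :
  teq2 s s' -> teq2 t t' ->
  teq2 [seq (p.1 * q.1, p.2 * q.2) | p <- s, q <- t]
       [seq (p.1 * q.1, p.2 * q.2) | p <- s', q <- t'].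
Proof.
move=> ss' tt' f g; rewrite !big_allpairs_dep /=.
have mulr_scalar (h : {scalar A}) c : scalar (fun x => h (x * c)).
  by move=> k u v; rewrite mulrDl -scalerAl linearP.
have mull_scalar (h : {scalar A}) c : scalar (fun x => h (c * x)).
  by move=> k u v; rewrite mulrDr -scalerAr linearP.
transitivity (\sum_(p <- s') \sum_(q <- t) f (p.1 * q.1) * g (p.2 * q.2)).
  rewrite exchange_big [RHS]exchange_big /=; apply: eq_bigr => q _.
  exact: ss' (scalar_of (mulr_scalar f q.1)) (scalar_of (mulr_scalar g q.2)).
apply: eq_bigr => p _.
exact: tt' (scalar_of (mull_scalar f p.1)) (scalar_of (mull_scalar g p.2)).
Qed.

Section HopfAlgebra.
Variables (K : fieldType) (A : algType K).
Variables (D : A -> seq (A * A)) (e : A -> K) (S : A -> A).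
Hypothesis hopfA : hopf_algebra D e S.

Lemma coprod_linear k a b :
  teq2 (D (k *: a + b)) ([seq (k *: p.1, p.2) | p <- D a] ++ D b).
Proof. by case: hopfA. Qed.

Lemma coprod_coassoc a :
  teq3 [seq (q.1, q.2, p.2) | p <- D a, q <- D p.1]
       [seq (p.1, q.1, q.2) | p <- D a, q <- D p.2].
Proof. by case: hopfA. Qed.

Lemma counit_scalar : scalar e.
Proof. by case: hopfA => _ _ []. Qed.

Lemma counitL a : \sum_(p <- D a) e p.1 *: p.2 = a.
Proof. by case: hopfA => _ _ [_ /(_ a) []]. Qed.

Lemma counitR a : \sum_(p <- D a) e p.2 *: p.1 = a.
Proof. by case: hopfA => _ _ [_ /(_ a) []]. Qed.

Lemma coprodM a b :
  teq2 (D (a * b)) [seq (p.1 * q.1, p.2 * q.2) | p <- D a, q <- D b].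
Proof. by case: hopfA => _ _ _ []. Qed.

Lemma counitM a b : e (a * b) = e a * e b.
Proof. by case: hopfA => _ _ _ []. Qed.

Lemma antipode_linear : linear S.
Proof. by case: hopfA => _ _ _ _ []. Qed.

Lemma antipodeL a : \sum_(p <- D a) S p.1 * p.2 = (e a)%:A.
Proof. by case: hopfA => _ _ _ _ [_ /(_ a) []]. Qed.

Lemma antipodeR a : \sum_(p <- D a) p.1 * S p.2 = (e a)%:A.
Proof. by case: hopfA => _ _ _ _ [_ /(_ a) []]. Qed.

Lemma coprod_sum_linear (G : A -> A -> A) :
  (forall y, linear (G^~ y)) -> (forall x, linear (G x)) ->
  linear (fun u => \sum_(p <- D u) G p.1 p.2).
Proof.
move=> G_linl G_linr k a b.
rewrite (teq2_sum G_linl G_linr (coprod_linear k a b)).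
rewrite big_cat big_map scaler_sumr; congr (_ + _); apply: eq_bigr => p _ /=.
exact: linear_funZ (G_linl p.2) k p.1.
Qed.

Ltac linear_tac := repeat (match goal with
  | |- forall _, _ => intro
  | |- _ => first [ apply: linear_sum_fun
                  | apply: (linear_comp_fun antipode_linear)
                  | apply: linear_mulr_fun | apply: linear_mull_fun
                  | apply: (linear_scalar_fun _ counit_scalar)
                  | apply: linear_scale_fun | apply: coprod_sum_linear ]
  end; simpl).

Lemma coassoc_sum (G : A -> A -> A -> A) (s : seq (A * A)) a :
  (forall v w, linear (fun u => G u v w)) ->
  (forall u w, linear (fun v => G u v w)) ->
  (forall u v, linear (G u v)) -> teq2 s (D a) ->
  \sum_(p <- s) \sum_(q <- D p.1) G q.1 q.2 p.2
    = \sum_(p <- D a) \sum_(q <- D p.2) G p.1 q.1 q.2.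
Proof.
move=> G_lin1 G_lin2 G_lin3 sa.
rewrite (teq2_sum (B := fun u w => \sum_(q <- D u) G q.1 q.2 w) _ _ sa) /=.
- have := teq3_sum G_lin1 G_lin2 G_lin3 (coprod_coassoc a).
  by rewrite !big_allpairs_dep; apply.
- move=> w; apply: (coprod_sum_linear (G := fun u v => G u v w)) => [v|u].
  + exact: G_lin1.
  + exact: G_lin2.
- by move=> u; apply: linear_sum_fun => q; exact: G_lin3.
Qed.

Lemma sum_mul_antipodeR u a : \sum_(p <- D a) u * p.1 * S p.2 = e a *: u.
Proof.
by rewrite -mulr_algr -antipodeR mulr_sumr; apply: eq_bigr => p _; rewrite mulrA.
Qed.

Lemma sum_mul_antipodeL u a : \sum_(p <- D a) u * S p.1 * p.2 = e a *: u.
Proof.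
by rewrite -mulr_algr -antipodeL mulr_sumr; apply: eq_bigr => p _; rewrite mulrA.
Qed.

Lemma sum_mul_antipodeR_mul u w a :
  \sum_(p <- D a) u * p.1 * S p.2 * w = e a *: (u * w).
Proof. by rewrite -mulr_suml sum_mul_antipodeR scalerAl. Qed.

Lemma sum_mul_antipodeL_mul u w a :
  \sum_(p <- D a) u * S p.1 * p.2 * w = e a *: (u * w).
Proof. by rewrite -mulr_suml sum_mul_antipodeL scalerAl. Qed.

Lemma counit_mul_expand x y w :
  e (x * y) *: w
    = \sum_(p <- D x) \sum_(q <- D y) S (p.1 * q.1) * p.2 * q.2 * w.
Proof.
rewrite -mulr_algl -antipodeL mulr_suml.
rewrite (teq2_sum (B := fun u v => S u * v * w) _ _ (coprodM x y));
  try by linear_tac.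
rewrite big_allpairs_dep; apply: eq_bigr => p _; apply: eq_bigr => q _ /=.
by rewrite !mulrA.
Qed.

Lemma antipodeM a b : S (a * b) = S b * S a.
Proof.
have S_sum := linear_fun_sum antipode_linear.
have S_Z := linear_funZ antipode_linear.
have lhs : S b * S a = \sum_(p <- D a) \sum_(x <- D p.1) \sum_(q <- D b)
    \sum_(y <- D q.1) S (x.1 * y.1) * x.2 * y.2 * S q.2 * S p.2.
  rewrite -{1}(counitL a) -{1}(counitL b) !S_sum mulr_sumr.
  apply: eq_bigr => p _; rewrite mulr_suml [RHS]exchange_big /=.
  apply: eq_bigr => q _.
  rewrite !S_Z -scalerAl -scalerAr scalerA mulrC -counitM counit_mul_expand.
  by apply: eq_bigr => x _; apply: eq_bigr => y _; rewrite !mulrA.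
have rhs : S (a * b) = \sum_(p <- D a) \sum_(x <- D p.2) \sum_(q <- D b)
    \sum_(y <- D q.2) S (p.1 * q.1) * x.1 * y.1 * S y.2 * S x.2.
  rewrite -{1}(counitR a) -{1}(counitR b) mulr_suml S_sum.
  apply: eq_bigr => p _; rewrite mulr_sumr S_sum exchange_big /=.
  apply: eq_bigr => q _; rewrite -scalerAl -scalerAr scalerA S_Z.
  under eq_bigr do rewrite sum_mul_antipodeR_mul.
  by rewrite -scaler_sumr sum_mul_antipodeR scalerA mulrC.
rewrite lhs rhs (coassoc_sum (a := a) (G := fun u v w => \sum_(q <- D b)
    \sum_(y <- D q.1) S (u * y.1) * v * y.2 * S q.2 * S w)) //=; try by linear_tac.
apply: eq_bigr => p _; apply: eq_bigr => x _; symmetry.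
by apply: (coassoc_sum (a := b)
  (G := fun u v w => S (p.1 * u) * x.1 * v * S w * S x.2)); linear_tac.
Qed.

Definition hopf_commutator a b :=
  \sum_(p <- D a) \sum_(q <- D b) p.1 * q.1 * S p.2 * S q.2.

Lemma hopf_subalgebra1 X : hopf_subalgebra D S X -> X 1.
Proof. by case. Qed.

Lemma hopf_subalgebraS X a : hopf_subalgebra D S X -> X a -> X (S a).
Proof. by case=> _ _ _ + _; apply. Qed.

Lemma hopf_subalgebra_coprod X a :
  hopf_subalgebra D S X -> X a -> exists2 s, in2 X X s & teq2 s (D a).
Proof. by case=> _ _ _ _ /[apply] [[s []]]; exists s. Qed.

Section CommutingSubalgebras.
Variables X Y : A -> Prop.
Hypotheses (subX : hopf_subalgebra D S X) (subY : hopf_subalgebra D S Y).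

Lemma commute_hopf_commutator :
  (forall a b, X a -> Y b -> a * b = b * a) ->
  forall a b, X a -> Y b -> hopf_commutator a b = (e a * e b)%:A.
Proof.
move=> XY_comm a b Xa Yb.
have [s sX sa] := hopf_subalgebra_coprod subX Xa.
have [t tY tb] := hopf_subalgebra_coprod subY Yb.
transitivity ((\sum_(p <- D a) p.1 * S p.2) * \sum_(q <- D b) q.1 * S q.2).
  2: by rewrite !antipodeR mulr_algl scalerA.
rewrite /hopf_commutator mulr_suml.
rewrite -(teq2_sum (B := fun u v => \sum_(q <- D b) u * q.1 * S v * S q.2) _ _ sa);
  try by linear_tac.
rewrite -(teq2_sum (B := fun u v => u * S v * \sum_(q <- D b) q.1 * S q.2) _ _ sa);
  try by linear_tac.
rewrite [LHS]big_seq [RHS]big_seq; apply: eq_bigr => p /sX [_ Xp2].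
rewrite mulr_sumr.
rewrite -(teq2_sum (B := fun u v => p.1 * u * S p.2 * S v) _ _ tb);
  try by linear_tac.
rewrite -(teq2_sum (B := fun u v => p.1 * S p.2 * (u * S v)) _ _ tb);
  try by linear_tac.
rewrite [LHS]big_seq [RHS]big_seq; apply: eq_bigr => q /tY [Yq1 _].
have XSp2 := hopf_subalgebraS subX Xp2.
by rewrite -[p.1 * q.1 * _]mulrA -(XY_comm _ _ XSp2 Yq1) !mulrA.
Qed.

Lemma hopf_commutator_commute :
  (forall a b, X a -> Y b -> hopf_commutator a b = (e a * e b)%:A) ->
  forall a b, X a -> Y b -> a * b = b * a.
Proof.
move=> XY_comm a b Xa Yb.
have [s sX sa] := hopf_subalgebra_coprod subX Xa.
have [t tY tb] := hopf_subalgebra_coprod subY Yb.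
have ab : a * b = \sum_(p <- D a) \sum_(x <- D p.2) \sum_(q <- D b)
    \sum_(y <- D q.2) p.1 * q.1 * S x.1 * S y.1 * y.2 * x.2.
  rewrite -{1}(counitR a) -{1}(counitR b) mulr_suml; apply: eq_bigr => p _.
  rewrite mulr_sumr [RHS]exchange_big /=; apply: eq_bigr => q _.
  under eq_bigr do rewrite sum_mul_antipodeL_mul.
  rewrite -scaler_sumr sum_mul_antipodeL scalerA -scalerAl -scalerAr scalerA.
  by rewrite mulrC.
have ba : b * a = \sum_(p <- s) \sum_(x <- D p.1) \sum_(q <- t)
    \sum_(y <- D q.1) x.1 * y.1 * S x.2 * S y.2 * q.2 * p.2.
  rewrite -{1}(counitL a) -{1}(counitL b).
  rewrite -(teq2_sum (B := fun u v => e u *: v) _ _ sa); try by linear_tac.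
  rewrite -(teq2_sum (B := fun u v => e u *: v) _ _ tb); try by linear_tac.
  rewrite mulr_sumr big_seq [RHS]big_seq; apply: eq_bigr => p /sX [Xp1 _].
  rewrite mulr_suml [RHS]exchange_big big_seq [RHS]big_seq /=.
  apply: eq_bigr => q /tY [Yq1 _].
  rewrite -scalerAl -scalerAr scalerA mulrC -mulr_algl -XY_comm // mulr_suml.
  apply: eq_bigr => x _; rewrite mulr_suml.
  by apply: eq_bigr => y _; rewrite !mulrA.
rewrite ab ba (coassoc_sum (G := fun u v w => \sum_(q <- t) \sum_(y <- D q.1)
    u * y.1 * S v * S y.2 * q.2 * w) _ _ _ sa); try by linear_tac.
apply: eq_bigr => p _; apply: eq_bigr => x _; symmetry.
by apply: (coassoc_sum (G := fun u v w => p.1 * u * S x.1 * S v * w * x.2));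
  linear_tac.
Qed.

Section UnitalMorphism.
Variable P : A -> A -> A.
Hypothesis P_hopf : tensor_hopf_morphism D e S X Y P.
Hypotheses (P_l : forall a, X a -> P a 1 = a) (P_r : forall b, Y b -> P 1 b = b).

Lemma tensor_hopf_morphismE a b : X a -> Y b -> P a b = a * b.
Proof.
case: P_hopf => _ [_ PM] _ _ Xa Yb.
have X1 := hopf_subalgebra1 subX; have Y1 := hopf_subalgebra1 subY.
by rewrite -{1}(mulr1 a) -{1}(mul1r b) PM // P_l // P_r.
Qed.

Lemma tensor_hopf_morphism_commute a b : X a -> Y b -> a * b = b * a.
Proof.
case: P_hopf => _ [_ PM] _ _ Xa Yb.
have X1 := hopf_subalgebra1 subX; have Y1 := hopf_subalgebra1 subY.
rewrite -tensor_hopf_morphismE // -{1}(mul1r a) -{1}(mulr1 b).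
by rewrite PM // P_l // P_r.
Qed.

End UnitalMorphism.

Lemma mul_tensor_hopf_morphism :
  (forall a b, X a -> Y b -> a * b = b * a) -> tensor_hopf_morphism D e S X Y *%R.
Proof.
move=> XY_comm; split.
- by split=> k x y z *; [rewrite mulrDl scalerAl | rewrite mulrDr scalerAr].
- split=> [|a a' b b' _ Xa' Yb _]; first exact: mulr1.
  by rewrite -mulrA (mulrA a') (XY_comm a' b) // !mulrA.
- split=> [a b s t _ _ _ sa _ tb f g|a b _ _]; last exact: counitM.
  rewrite (coprodM a b f g); apply: teq2_allpairs_mul => f' g'.
    exact: esym (sa f' g').
  exact: esym (tb f' g').
- move=> a b Xa Yb.
  have XSa := hopf_subalgebraS subX Xa; have YSb := hopf_subalgebraS subY Yb.
  by rewrite antipodeM [RHS]XY_comm.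
Qed.

End CommutingSubalgebras.

End HopfAlgebra.

Unset Implicit Arguments.

Theorem lemma4p1 (K : fieldType) (A : algType K)
  (D : A -> seq (A * A)) (e : A -> K) (S : A -> A) (X Y : A -> Prop) :
  hopf_algebra D e S -> cocommutative D ->
  hopf_subalgebra D S X -> hopf_subalgebra D S Y ->
  let cond_a :=
    exists P : A -> A -> A,
      [/\ tensor_hopf_morphism D e S X Y P,
          (forall a, X a -> P a 1 = a),
          (forall b, Y b -> P 1 b = b)
        & (* uniqueness *)
          forall P' : A -> A -> A,
            tensor_hopf_morphism D e S X Y P' ->
            (forall a, X a -> P' a 1 = a) ->
            (forall b, Y b -> P' 1 b = b) ->
            forall a b, X a -> Y b -> P' a b = P a b] in
  let cond_b := forall a b, X a -> Y b -> a * b = b * a in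
  let cond_c := forall a b, X a -> Y b ->
    \sum_(p <- D a) \sum_(q <- D b) p.1 * q.1 * S p.2 * S q.2
    = (e a * e b)%:A in
  (cond_a <-> cond_b) /\ (cond_b <-> cond_c).
Proof.
move=> hopfA _ subX subY cond_a cond_b cond_c.
rewrite {}/cond_a {}/cond_b {}/cond_c; split; last first.
  split; [exact: (commute_hopf_commutator hopfA subX subY)
        | exact: (hopf_commutator_commute hopfA subX subY)].
split=> [[P [P_hopf P_l P_r _]]|XY_comm].
  exact: (tensor_hopf_morphism_commute subX subY P_hopf P_l P_r).
exists *%R; split.
- exact: (mul_tensor_hopf_morphism hopfA subX subY).
- by move=> a _; rewrite mulr1.
- by move=> b _; rewrite mul1r.
- by move=> P' P'_hopf; exact: (tensor_hopf_morphismE subX subY P'_hopf).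
Qed.
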